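(* For every positive integer $n$: $$3\,\frac{n(n+1)}{2}\ \Big|\ \sum_{k=1}^n kD_kD_{k-1},\qquad \frac{n^2(n+1)^2}{4}\ \Big|\ \sum_{k=1}^n k^3D_kD_{k-1},$$ $$\frac{n(n+1)(n+2)}{(2,n)}\ \Big|\ \sum_{k=1}^n k(k+1)(2k+1)s_k^2,$$ and $$\frac{1}{n(n+1)(n+2)}\sum_{k=1}^n k(k+1)(2k+1)(-1)^{n-k}s_k^2=\frac{s_ns_{n+1}}{3}\in\mathbb{Z},$$ where $(2,n)$ is the greatest common divisor of $2$ and $n$.
   Context: $D_n=\sum_{k=0}^n\binom{n}{k}\binom{n+k}{k}$ is the central Delannoy number. For $m\ge k\ge1$, the Narayana number is $N(m,k)=\frac1m\binom{m}{k}\binom{m}{k-1}$, and for $m\ge1$ the little Schröder number is $s_m=\sum_{k=1}^m N(m,k)2^{m-k}$. *)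

From mathcomp Require Import all_boot all_order all_algebra.
Set Implicit Arguments. Unset Strict Implicit. Unset Printing Implicit Defensive.

Definition delannoy (n : nat) : nat :=
  \sum_(0 <= k < n.+1) 'C(n, k) * 'C(n + k, k).

(* Narayana number N(m,k) = (1/m) C(m,k) C(m,k-1), for m >= k >= 1;
   the division is exact in that range. *)
Definition narayana (m k : nat) : nat := ('C(m, k) * 'C(m, k.-1)) %/ m.

Definition schroeder (m : nat) : nat :=
  \sum_(1 <= k < m.+1) narayana m k * 2 ^ (m - k).

From mathcomp Require Import all_boot all_order all_algebra.
From mathcomp Require Import ring lra zify.
Import GRing.Theory Num.Theory.

(* The expansion D_n = sum_j C(n,j)^2 2^(n-j) gives D_(n+1) = 3 D_n + 4 n s_n, and
   Zeilberger's recurrence (n+2) D_(n+2) + (n+1) D_n = 3 (2n+3) D_(n+1) then gives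
   3 D_(n+1) - D_n = 4 (n+2) s_(n+1).  These two first-order relations let each of the
   four sums be evaluated in closed form by induction over Q, for instance
     4 sum_k k(k+1)(2k+1) s_k^2 = n(n+1)(n+2) (D_(n+1) s_n - D_n s_(n+1)),
     3 sum_k (-1)^(n-k) k(k+1)(2k+1) s_k^2 = n(n+1)(n+2) s_n s_(n+1).
   The divisibilities are then arithmetic of D and s: D_n is odd, and so is s_n for n > 0;
   for even n, 3 | s_n because the Narayana symmetry N(n,k) = N(n,n+1-k) pairs 2^(n-k)
   with 2^(k-1), and 2^a + 2^b = 0 mod 3 when a + b is odd; hence 3 | D_n s_n.  Finally the
   cross term D_(n+1) s_n - D_n s_(n+1) is even, and divisible by 4 when n is odd. *)

Lemma natr_eq_div {R : numFieldType} {c a b : nat} :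
  0 < c -> c * a = b -> (a%:R = b%:R / c%:R :> R)%R.
Proof.
move=> c_gt0 <-; rewrite natrM mulrAC divff ?mul1r //.
by rewrite pnatr_eq0 -lt0n.
Qed.

Lemma sumn_widen (F : nat -> nat) a b : a <= b -> (forall j, a <= j -> F j = 0) ->
  \sum_(0 <= j < a) F j = \sum_(0 <= j < b) F j.
Proof.
move=> le_ab F0; rewrite [RHS](big_cat_nat (leq0n a) le_ab) /=.
rewrite [X in _ + X]big1_seq ?addn0 // => j; rewrite mem_index_iota => /andP[_ /andP[le_aj _]].
exact: F0.
Qed.

(* Locked so that [natrM] cannot unfold it when an identity is moved to [rat]. *)
Fact delannoy_term_key : unit. Proof. by []. Qed.
Definition delannoy_term n k := locked_with delannoy_term_key ('C(n, k) * 'C(n + k, k)).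

Lemma delannoy_termE n k : delannoy_term n k = 'C(n, k) * 'C(n + k, k).
Proof. by rewrite /delannoy_term unlock. Qed.

Lemma delannoy_term_small n k : n < k -> delannoy_term n k = 0.
Proof. by move=> lt_nk; rewrite delannoy_termE bin_small. Qed.

Lemma delannoy_term0 n : delannoy_term n 0 = 1.
Proof. by rewrite delannoy_termE !bin0. Qed.

Lemma delannoy_termSn n k :
  (n.+1 - k) * delannoy_term n.+1 k = (n.+1 + k) * delannoy_term n k.
Proof.
have down_n := mul_bin_down n.+1 k.
have down_nk := mul_bin_down (n.+1 + k) k.
rewrite addnK addSn /= in down_nk.
by rewrite !delannoy_termE mulnA -down_n /= addSn mulnAC -down_nk; ring.
Qed.

Lemma delannoy_termnS n k :
  k.+1 ^ 2 * delannoy_term n k.+1 = (n + k.+1) * (n - k) * delannoy_term n k.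
Proof.
have left_n := mul_bin_left n k.
have diag_nk := mul_bin_diag (n + k.+1) k.
rewrite addnS /= in diag_nk.
rewrite !delannoy_termE addnS.
transitivity ((k.+1 * 'C(n, k.+1)) * (k.+1 * 'C((n + k).+1, k.+1))); first by ring.
by rewrite left_n -diag_nk; ring.
Qed.

Lemma delannoy_term_rec n k :
  n.+2 * delannoy_term n.+2 k.+1 + n.+1 * delannoy_term n k.+1 =
  (2 * n + 3) * (delannoy_term n.+1 k.+1 + 2 * delannoy_term n.+1 k).
Proof.
have [lt_n1k | le_kn1] := ltnP n.+1 k; first by rewrite !delannoy_term_small //; lia.
apply/eqP; rewrite -(eqr_nat rat); apply/eqP; rewrite !(natrD, natrM).
have [lt_nk | le_kn] := ltnP n k.
  have -> : k = n.+1 by lia.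
  have top := delannoy_termnS n.+2 n.+1.
  have diag := delannoy_termSn n.+1 n.+1.
  rewrite (_ : n.+2 - n.+1 = 1) in top diag; last by lia.
  rewrite (@delannoy_term_small n) // (@delannoy_term_small n.+1) //.
  rewrite (natr_eq_div _ top) ?expn_gt0 // !(natrD, natrM).
  rewrite (natr_eq_div _ diag) // !(natrD, natrM).
  field; apply: lt0r_neq0; have := ler0n rat n; lra.
have [m ->] : exists m, n = k + m by exists (n - k); lia.
have up2 := delannoy_termSn (k + m).+1 k.+1.
have up1 := delannoy_termSn (k + m) k.+1.
have upk := delannoy_termnS (k + m).+1 k.
rewrite (_ : (k + m).+2 - k.+1 = m.+1) in up2; last by lia.
rewrite (_ : (k + m).+1 - k.+1 = m) in up1; last by lia.
rewrite (_ : (k + m).+1 - k = m.+1) in upk; last by lia.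
rewrite (natr_eq_div _ up2) // (natr_eq_div _ (esym up1)); last by lia.
rewrite (natr_eq_div _ (esym upk)); last by lia.
rewrite !(natrD, natrM).
field; have k_ge0 := ler0n rat k; have m_ge0 := ler0n rat m.
by rewrite !lt0r_neq0 //; lra.
Qed.

Lemma delannoyE_term {n N : nat} : n < N -> delannoy n = \sum_(0 <= k < N) delannoy_term n k.
Proof.
move=> lt_nN; rewrite /delannoy (eq_bigr _ (fun k _ => esym (delannoy_termE n k))).
by apply: sumn_widen => // k; exact: delannoy_term_small.
Qed.

Lemma delannoy_rec n :
  n.+2 * delannoy n.+2 + n.+1 * delannoy n = 3 * (2 * n + 3) * delannoy n.+1.
Proof.
have head m : m < n.+3 -> delannoy m = 1 + \sum_(0 <= i < n.+2) delannoy_term m i.+1.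
  by move=> lt_m; rewrite (delannoyE_term lt_m) big_nat_recl // delannoy_term0.
have summed : \sum_(0 <= i < n.+2)
    (n.+2 * delannoy_term n.+2 i.+1 + n.+1 * delannoy_term n i.+1) =
  \sum_(0 <= i < n.+2)
    (2 * n + 3) * (delannoy_term n.+1 i.+1 + 2 * delannoy_term n.+1 i).
  by apply: eq_bigr => i _; exact: delannoy_term_rec.
rewrite big_split -!big_distrr /= big_split -big_distrr /= in summed.
rewrite -(delannoyE_term (ltnSn n.+1)) (head n.+1) // in summed.
by rewrite (head n.+2) // (head n) ?(head n.+1) //; lia.
Qed.

Lemma natr_bin {R : numFieldType} n k : k <= n ->
  ('C(n, k)%:R = n`!%:R / (k`!%:R * (n - k)`!%:R) :> R)%R.
Proof.
move=> le_kn; rewrite -natrM; apply: natr_eq_div; first by rewrite muln_gt0 !fact_gt0.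
by rewrite mulnC bin_fact.
Qed.

Lemma mul_bin_bin n k j : j <= k -> 'C(n, k) * 'C(k, j) = 'C(n, j) * 'C(n - j, k - j).
Proof.
move=> le_jk; have [lt_nk | le_kn] := ltnP n k.
  rewrite bin_small // mul0n; have [lt_nj | le_jn] := ltnP n j; first by rewrite bin_small.
  by rewrite (@bin_small (n - j)) ?muln0 //; lia.
have [b Ek] : exists b, k = j + b by exists (k - j); lia.
have [a En] : exists a, n = k + a by exists (n - k); lia.
subst n k.
apply/eqP; rewrite -(eqr_nat rat); apply/eqP.
rewrite !natrM !natr_bin; try lia.
rewrite -[j + b + a]addnA !addKn addnA addKn.
by field; rewrite !pnatr_eq0 -!lt0n !fact_gt0.
Qed.

Lemma sum_bin n : \sum_(0 <= i < n.+1) 'C(n, i) = 2 ^ n.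
Proof.
rewrite big_mkord -[2]/(1 + 1) expnDn.
by apply: eq_bigr => i _; rewrite !exp1n !muln1.
Qed.

Lemma sum_mul_bin_bin n j : j <= n ->
  \sum_(0 <= k < n.+1) 'C(n, k) * 'C(k, j) = 'C(n, j) * 2 ^ (n - j).
Proof.
move=> le_jn; rewrite (big_cat_nat (leq0n j) (leqW le_jn)) /= big_nat_cond big1 ?add0n; last first.
  by move=> k /andP[/andP[_ lt_kj] _]; rewrite (@bin_small k j) ?muln0.
rewrite (eq_big_nat _ _ (F2 := fun k => 'C(n, j) * 'C(n - j, k - j))); last first.
  by move=> k /andP[le_jk _]; rewrite mul_bin_bin.
rewrite -big_distrr /=; congr (_ * _).
rewrite -{1}(add0n j) big_addn subSn // -sum_bin.
by apply: eq_bigr => i _; rewrite addnK.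
Qed.

Lemma bin_addn_sum n k : 'C(n + k, k) = \sum_(0 <= j < n.+1) 'C(n, j) * 'C(k, j).
Proof.
rewrite -binomial.Vandermonde.
have -> : \sum_(j < k.+1) 'C(n, j) * 'C(k, k - j) = \sum_(0 <= j < k.+1) 'C(n, j) * 'C(k, k - j).
  by rewrite big_mkord.
rewrite (eq_big_nat _ _ (F2 := fun j => 'C(n, j) * 'C(k, j))); last first.
  by move=> j /andP[_ le_jk]; rewrite bin_sub.
rewrite (@sumn_widen _ k.+1 (n + k).+1) ?(@sumn_widen _ n.+1 (n + k).+1) //; try lia.
- by move=> j lt_nj; rewrite bin_small.
- by move=> j lt_kj; rewrite (@bin_small k) ?muln0.
Qed.

Lemma delannoy_binsq n : delannoy n = \sum_(0 <= j < n.+1) 'C(n, j) ^ 2 * 2 ^ (n - j).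
Proof.
rewrite /delannoy (eq_bigr _ (fun k _ => congr1 _ (bin_addn_sum n k))).
rewrite (eq_bigr _ (fun k _ => big_distrr _ _ _)) exchange_big /=.
apply: eq_big_nat => j /andP[_ le_jn].
rewrite (eq_bigr (fun k => 'C(n, j) * ('C(n, k) * 'C(k, j)))); last by move=> k _; ring.
by rewrite -big_distrr /= sum_mul_bin_bin // mulnA.
Qed.

Lemma dvdn_mul_binS n i : n %| 'C(n, i.+1) * 'C(n, i).
Proof.
have [lt_in | le_ni] := ltnP i n; last by rewrite bin_small ?ltnS.
set Y := 'C(n, i.+1) * 'C(n, i).
have dvd_left : n %| i.+1 * Y by rewrite /Y mulnA -mul_bin_diag -mulnA dvdn_mulr.
have dvd_down : n %| (n - i) * Y by rewrite /Y mulnCA -mul_bin_down mulnCA dvdn_mulr.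
have : n %| n.+1 * Y.
  have -> : n.+1 = i.+1 + (n - i) by lia.
  by rewrite mulnDl dvdn_add.
by rewrite Gauss_dvdr // coprimenS.
Qed.

Lemma mul_narayana n k : 0 < k -> n * narayana n k = 'C(n, k) * 'C(n, k.-1).
Proof. by case: k => // i _; rewrite /narayana mulnC divnK ?dvdn_mul_binS. Qed.

Lemma narayana_sym n k : 0 < k <= n -> narayana n (n.+1 - k) = narayana n k.
Proof.
case: k => // j /andP[_ lt_jn]; rewrite /narayana subSS bin_sub; last lia.
rewrite (_ : (n - j).-1 = n - j.+1); last by lia.
by rewrite bin_sub // mulnC.
Qed.

Lemma mul_schroeder n :
  n * schroeder n = \sum_(0 <= i < n) 'C(n, i.+1) * 'C(n, i) * 2 ^ (n - i.+1).
Proof.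
rewrite /schroeder big_distrr /= big_add1 /=.
by apply: eq_bigr => i _; rewrite mulnA mul_narayana.
Qed.

Lemma sum_mul_pow2_double (F : nat -> nat) n : F n = 0 ->
  \sum_(0 <= i < n.+1) F i * 2 ^ (n - i) = 2 * \sum_(0 <= i < n) F i * 2 ^ (n - i.+1).
Proof.
move=> Fn0; rewrite big_nat_recr //= Fn0 addn0 big_distrr /=.
by apply: eq_big_nat => i /andP[_ lt_in]; rewrite -(subnSK lt_in) expnS mulnCA.
Qed.

Lemma delannoyS n : delannoy n.+1 = 3 * delannoy n + 4 * (n * schroeder n).
Proof.
set b := \sum_(0 <= i < n) 'C(n, i.+1) ^ 2 * 2 ^ (n - i.+1).
have Dn : delannoy n = 2 ^ n + b.
  by rewrite delannoy_binsq big_nat_recl // bin0 subn0 exp1n mul1n.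
rewrite mul_schroeder delannoy_binsq big_nat_recl // bin0 subn0 exp1n mul1n.
rewrite (eq_bigr (fun i => 'C(n, i.+1) ^ 2 * 2 ^ (n - i) + 'C(n, i) ^ 2 * 2 ^ (n - i)
  + 2 * ('C(n, i.+1) * 'C(n, i)) * 2 ^ (n - i))); last first.
  by move=> i _; rewrite binS sqrnD subSS !mulnDl.
rewrite !big_split /= -delannoy_binsq !sum_mul_pow2_double ?(@bin_small n n.+1) ?muln0 //.
set c := \sum_(0 <= i < n) 'C(n, i.+1) * 'C(n, i) * 2 ^ (n - i.+1).
have -> : \sum_(0 <= i < n) 2 * ('C(n, i.+1) * 'C(n, i)) * 2 ^ (n - i.+1) = 2 * c.
  by rewrite /c big_distrr /=; apply: eq_bigr => i _; rewrite !mulnA.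
rewrite -/b Dn expnS; lia.
Qed.

Lemma schroeder_rec n : 4 * n.+2 * schroeder n.+1 + delannoy n = 3 * delannoy n.+1.
Proof.
apply/eqP; rewrite -(eqn_pmul2l (ltn0Sn n)); apply/eqP.
have := delannoy_rec n; rewrite delannoyS; nia.
Qed.

Section ClosedForms.
Local Open Scope ring_scope.

Lemma natr_delannoyS n :
  (delannoy n.+1)%:R = 3 * (delannoy n)%:R + 4 * n%:R * (schroeder n)%:R :> rat.
Proof. by rewrite delannoyS natrD !natrM mulrA. Qed.

Lemma natr_schroederS n :
  (schroeder n.+1)%:R = (3 * (delannoy n.+1)%:R - (delannoy n)%:R) / (4 * n.+2%:R) :> rat.
Proof.
have /(congr1 (GRing.natmul (1 : rat))) := schroeder_rec n.
by rewrite natrD !natrM => <-; field; rewrite -natrD pnatr_eq0.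
Qed.

Lemma sum_delannoy_prod n :
  2 * (\sum_(1 <= k < n.+1) k * delannoy k * delannoy k.-1)%N%:R = n%:R * n.+1%:R *
    (3 * (delannoy n)%:R ^+ 2 - 4 * (delannoy n)%:R * (schroeder n)%:R
     - 6 * n%:R * n.+1%:R * (schroeder n)%:R ^+ 2) :> rat.
Proof.
elim: n => [|n IH]; first by rewrite big_geq // !mul0r mulr0.
rewrite big_nat_recr //= natrD mulrDr IH !natrM natr_schroederS natr_delannoyS.
by field; rewrite -natrD pnatr_eq0.
Qed.

Lemma sum_cube_delannoy_prod n :
  4 * (\sum_(1 <= k < n.+1) k ^ 3 * delannoy k * delannoy k.-1)%N%:R =
    n%:R ^+ 2 * n.+1%:R ^+ 2 *
    (2 * (delannoy n)%:R ^+ 2 - 2 * (delannoy n)%:R * (schroeder n)%:R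
     - (2 * n%:R + 1) ^+ 2 * (schroeder n)%:R ^+ 2) :> rat.
Proof.
elim: n => [|n IH]; first by rewrite big_geq // expr0n /= !mul0r mulr0.
rewrite big_nat_recr //= natrD mulrDr IH !natrM ?natrX natr_schroederS natr_delannoyS.
by field; rewrite -natrD pnatr_eq0.
Qed.

Lemma sum_schroeder_sqr n :
  4 * (\sum_(1 <= k < n.+1) k * k.+1 * k.*2.+1 * schroeder k ^ 2)%N%:R =
    n%:R * n.+1%:R * n.+2%:R *
    ((delannoy n.+1)%:R * (schroeder n)%:R - (delannoy n)%:R * (schroeder n.+1)%:R) :> rat.
Proof.
elim: n => [|n IH]; first by rewrite big_geq // !mul0r.
rewrite big_nat_recr //= natrD mulrDr IH !natrM ?natrX -?muln2 ?natrM.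
rewrite (natr_schroederS n.+1) (natr_delannoyS n.+1) (natr_schroederS n) natr_delannoyS.
by field; rewrite -!natrD !pnatr_eq0.
Qed.

Lemma alt_sum_schroeder_sqr n :
  3 * \sum_(1 <= k < n.+1) (-1) ^+ (n - k) * (k * k.+1 * k.*2.+1 * schroeder k ^ 2)%:R =
    n%:R * n.+1%:R * n.+2%:R * ((schroeder n)%:R * (schroeder n.+1)%:R) :> rat.
Proof.
elim: n => [|n IH]; first by rewrite big_geq // !mul0r mulr0.
rewrite big_nat_recr //= subnn expr0 mul1r.
under eq_big_nat => k /andP[_ lt_kn] do rewrite subSn // exprS mulN1r mulNr.
rewrite sumrN mulrDr mulrN IH !natrM ?natrX -?muln2 ?natrM.
rewrite (natr_schroederS n.+1) (natr_delannoyS n.+1) (natr_schroederS n) natr_delannoyS.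
by field; rewrite -!natrD !pnatr_eq0.
Qed.
End ClosedForms.

Lemma expn2_mod3 a : 2 ^ a %% 3 = if odd a then 2 else 1.
Proof. by elim: a => // a IH; rewrite expnS -modnMm IH /=; case: (odd a). Qed.

Lemma dvdn3_expn2D a b : odd (a + b) -> 3 %| 2 ^ a + 2 ^ b.
Proof. by rewrite /dvdn -modnDm !expn2_mod3 oddD; case: (odd a); case: (odd b). Qed.

Lemma double_schroeder n :
  2 * schroeder n = \sum_(1 <= k < n.+1) narayana n k * (2 ^ (n - k) + 2 ^ k.-1).
Proof.
rewrite mul2n -addnn {2}/schroeder big_nat_rev /= /schroeder -big_split /=.
apply: eq_big_nat => k /andP[k_gt0 lt_kn1].
rewrite (_ : 1 + n.+1 - k.+1 = n.+1 - k); last by lia.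
rewrite narayana_sym; last by lia.
by rewrite (_ : n - (n.+1 - k) = k.-1) ?mulnDr //; lia.
Qed.

Lemma dvdn3_schroeder n : ~~ odd n -> 3 %| schroeder n.
Proof.
move=> even_n; rewrite -(@Gauss_dvdr _ 2) // double_schroeder big_nat_cond.
apply: dvdn_sum => k /andP[/andP[k_gt0 lt_kn1] _]; apply/dvdn_mull/dvdn3_expn2D.
rewrite (_ : n - k + k.-1 = n.-1); last by lia.
by case: n even_n lt_kn1 => [|n] /=; [lia | rewrite negbK].
Qed.

Lemma odd_schroeder n : 0 < n -> odd (schroeder n).
Proof.
case: n => // n _; rewrite /schroeder big_nat_recr //= subnn muln1.
rewrite /narayana binn binSn mul1n divnn /= oddD addbT -dvdn2 big_nat_cond.
apply: dvdn_sum => k /andP[/andP[_ lt_kn1] _]; apply: dvdn_mull.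
rewrite (_ : n.+1 - k = (n - k).+1); last by lia.
by rewrite expnS dvdn_mulr.
Qed.

Lemma odd_delannoy n : odd (delannoy n).
Proof.
elim: n => [|n IH]; first by rewrite /delannoy big_nat1.
by rewrite delannoyS oddD !oddM IH.
Qed.

Lemma dvdn3_delannoy n : odd n -> 3 %| delannoy n.
Proof.
case: n => // n /= even_n; rewrite delannoyS; apply: dvdn_add; first exact: dvdn_mulr.
by do 2!apply: dvdn_mull; exact: dvdn3_schroeder.
Qed.

Lemma dvdn3_delannoyM_schroeder n : 3 %| delannoy n * schroeder n.
Proof.
have [odd_n | even_n] := boolP (odd n).
  by rewrite dvdn_mulr // dvdn3_delannoy.
by rewrite dvdn_mull // dvdn3_schroeder.
Qed.

Lemma dvdn3_schroederMS n : 3 %| schroeder n * schroeder n.+1.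
Proof.
have [odd_n | even_n] := boolP (odd n).
  by rewrite dvdn_mull // dvdn3_schroeder //= odd_n.
by rewrite dvdn_mulr // dvdn3_schroeder.
Qed.

Definition ds_cross n := delannoy n.+1 * schroeder n - delannoy n * schroeder n.+1.

Lemma sum_schroeder_sqr_nat n :
  4 * (\sum_(1 <= k < n.+1) k * k.+1 * k.*2.+1 * schroeder k ^ 2)
    + n * n.+1 * n.+2 * (delannoy n * schroeder n.+1)
  = n * n.+1 * n.+2 * (delannoy n.+1 * schroeder n).
Proof.
apply/eqP; rewrite -(eqr_nat rat); apply/eqP.
by rewrite natrD natrM sum_schroeder_sqr !natrM; ring.
Qed.

Lemma sum_schroeder_sqr_cross n :
  4 * (\sum_(1 <= k < n.+1) k * k.+1 * k.*2.+1 * schroeder k ^ 2)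
  = n * n.+1 * n.+2 * ds_cross n.
Proof. by rewrite /ds_cross mulnBr -sum_schroeder_sqr_nat addnK. Qed.

Lemma even_ds_cross n : 0 < n -> 2 %| ds_cross n.
Proof.
move=> n_gt0; have le_DS : delannoy n * schroeder n.+1 <= delannoy n.+1 * schroeder n.
  rewrite -(@leq_pmul2l (n * n.+1 * n.+2)) ?muln_gt0 ?n_gt0 //.
  by rewrite -sum_schroeder_sqr_nat leq_addl.
by rewrite dvdn2 oddB // !oddM !odd_delannoy !odd_schroeder.
Qed.

Lemma ds_crossS n :
  n.+3 * ds_cross n.+1 = n * ds_cross n + 4 * (n.+1.*2.+1 * schroeder n.+1 ^ 2).
Proof.
apply/eqP; rewrite -(@eqn_pmul2l (n.+1 * n.+2)) //; apply/eqP.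
transitivity (4 * \sum_(1 <= k < n.+2) k * k.+1 * k.*2.+1 * schroeder k ^ 2).
  by rewrite sum_schroeder_sqr_cross; ring.
by rewrite big_nat_recr //= mulnDr sum_schroeder_sqr_cross -!muln2; ring.
Qed.

Lemma dvdn4_ds_cross n : odd n -> 4 %| ds_cross n.
Proof.
case: n => // n /= even_n.
have : 4 %| n.+3 * ds_cross n.+1.
  rewrite ds_crossS; apply: dvdn_add; last exact: dvdn_mulr.
  case: n even_n => [|n] //= odd_n.
  by apply: (@dvdn_mul 2 2); [rewrite dvdn2 | exact: even_ds_cross].
by rewrite Gauss_dvdr // (_ : 4 = 2 ^ 2) // coprime_pexpl // coprime2n /= negbK.
Qed.

Lemma dvdn4_gcd_ds_cross n : 0 < n -> 4 %| gcdn 2 n * ds_cross n.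
Proof.
move=> n_gt0; have [odd_n | even_n] := boolP (odd n).
  by rewrite dvdn_mull // dvdn4_ds_cross.
have /gcdn_idPl -> : 2 %| n by rewrite dvdn2.
by apply: (@dvdn_mul 2 2); rewrite ?even_ds_cross.
Qed.

Lemma dvdn_addM_eq d a b c : a + d * b = d * c -> d %| a.
Proof.
move=> E; have : d %| a + d * b by rewrite E dvdn_mulr.
by rewrite dvdn_addl // dvdn_mulr.
Qed.

Lemma double_half_mulnS n : 2 * (n * n.+1 %/ 2) = n * n.+1.
Proof. by rewrite mulnC divnK // dvdn2 oddM /= andbN. Qed.

Lemma dvdn_sum_delannoy_prod n :
  3 * (n * n.+1 %/ 2) %| \sum_(1 <= k < n.+1) k * delannoy k * delannoy k.-1.
Proof.
have [w Dsw] : exists w, delannoy n * schroeder n = 3 * w.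
  by have /dvdnP[w ->] := dvdn3_delannoyM_schroeder n; exists w; rewrite mulnC.
have := sum_delannoy_prod n; have := double_half_mulnS n.
move: (\sum_(1 <= k < n.+1) _) (n * n.+1 %/ 2) => S m Em ES.
apply: (@dvdn_addM_eq _ _ (4 * w + 4 * m * schroeder n ^ 2) (delannoy n ^ 2)).
apply/eqP; rewrite -(eqr_nat rat); apply/eqP.
rewrite !(natrD, natrM, natrX) (natr_eq_div _ Em) // (natr_eq_div _ (esym Dsw)) // natrM.
have -> : (S%:R = 2 * S%:R / 2 :> rat)%R by field.
by rewrite ES; field.
Qed.

Lemma dvdn_sum_cube_delannoy_prod n :
  n ^ 2 * n.+1 ^ 2 %/ 4 %| \sum_(1 <= k < n.+1) k ^ 3 * delannoy k * delannoy k.-1.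
Proof.
rewrite -expnMn -double_half_mulnS expnMn mulKn //.
have := sum_cube_delannoy_prod n; have := double_half_mulnS n.
move: (\sum_(1 <= k < n.+1) _) (n * n.+1 %/ 2) => S m Em ES.
apply: (@dvdn_addM_eq _ _ (2 * (delannoy n * schroeder n) + n.*2.+1 ^ 2 * schroeder n ^ 2)
  (2 * delannoy n ^ 2)).
apply/eqP; rewrite -(eqr_nat rat); apply/eqP.
rewrite -muln2 !(natrD, natrM, natrX) (natr_eq_div _ Em) // natrM.
have -> : (S%:R = 4 * S%:R / 4 :> rat)%R by field.
by rewrite ES; field.
Qed.

Lemma dvdn_sum_schroeder_sqr n : 0 < n ->
  n * n.+1 * n.+2 %/ gcdn 2 n %| \sum_(1 <= k < n.+1) k * k.+1 * k.*2.+1 * schroeder k ^ 2.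
Proof.
move=> n_gt0; set c := n * n.+1 * n.+2.
have g_dvd_c : gcdn 2 n %| c by rewrite /c !dvdn_mulr ?dvdn_gcdr.
rewrite -(@dvdn_pmul2r 4) // [X in _ %| X]mulnC sum_schroeder_sqr_cross -/c.
by rewrite -{2}(divnK g_dvd_c) -mulnA dvdn_mul ?dvdn4_gcd_ds_cross.
Qed.

Lemma alt_sum_schroeder_sqr_div n : 0 < n ->
  ((n * n.+1 * n.+2)%:R^-1 *
     \sum_(1 <= k < n.+1) (-1) ^+ (n - k) * (k * k.+1 * k.*2.+1 * schroeder k ^ 2)%:R
   = (schroeder n * schroeder n.+1)%:R / 3 :> rat)%R.
Proof.
move=> n_gt0; have := alt_sum_schroeder_sqr n.
move: (\sum_(1 <= k < n.+1) _)%R => A EA.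
have -> : A = (3 * A / 3)%R by field.
rewrite EA !natrM; field; have : (0 < n%:R :> rat)%R by rewrite ltr0n.
by move=> n_pos; rewrite !lt0r_neq0 //; lra.
Qed.

Theorem corollary1p1 (n : nat) (hn : (0 < n)%N) :
  [/\ (3 * (n * n.+1 %/ 2) %| \sum_(1 <= k < n.+1) k * delannoy k * delannoy k.-1)%N,
      ((n ^ 2 * n.+1 ^ 2) %/ 4 %| \sum_(1 <= k < n.+1) k ^ 3 * delannoy k * delannoy k.-1)%N,
      ((n * n.+1 * n.+2) %/ gcdn 2 n %|
         \sum_(1 <= k < n.+1) k * k.+1 * k.*2.+1 * schroeder k ^ 2)%N,
      ((n * n.+1 * n.+2)%:R^-1 *
         \sum_(1 <= k < n.+1) (-1) ^+ (n - k) * (k * k.+1 * k.*2.+1 * schroeder k ^ 2)%:R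
       = (schroeder n * schroeder n.+1)%:R / 3 :> rat)%R
    & (3 %| schroeder n * schroeder n.+1)%N].
Proof.
split.
- exact: dvdn_sum_delannoy_prod.
- exact: dvdn_sum_cube_delannoy_prod.
- exact: dvdn_sum_schroeder_sqr.
- exact: alt_sum_schroeder_sqr_div.
- exact: dvdn3_schroederMS.
Qed.
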